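(* Let $n\geq 3$ and let $K_n$ be the complete graph on $n$ vertices. Then $\chi_{td}(\mathrm{cl}(K_n)) \leq 2\chi_{td}(K_n)$.
   Context: For a simple graph $G$ and a positive integer $k$, a proper $k$-total difference labeling of $G$ is a function $f: V(G)\to\{1,\dots,k\}$, extended to edges by $f(\{u,v\}) = |f(u)-f(v)|$, such that: (i) adjacent vertices receive different labels; (ii) two distinct edges sharing a vertex receive different labels; (iii) no edge receives the same label as either of its endpoints. $\chi_{td}(G)$ denotes the smallest $k$ for which such a labeling exists. The clone $\mathrm{cl}(G)$ of $G$ is the Cartesian product $G\,\square\, K_2$, i.e. two copies of $G$ with each vertex joined by an edge to its corresponding copy. *)

From mathcomp Require Import all_boot.
Set Implicit Arguments. Unset Strict Implicit. Unset Printing Implicit Defensive.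

Record sgraph := SGraph {
  vtx : finType;
  adj : rel vtx;
  adj_sym : symmetric adj;
  adj_irr : irreflexive adj }.

Definition absdiff (a b : nat) : nat := (a - b) + (b - a).

Definition ptd_labeling (G : sgraph) (k : nat) (f : vtx G -> nat) : Prop :=
  (forall v, 1 <= f v <= k) /\
  (forall u v, adj u v -> f u <> f v) /\
  (* (ii) distinct edges {u,v},{u,w} sharing vertex u get different labels *)
  (forall u v w, adj u v -> adj u w -> v <> w -> absdiff (f u) (f v) <> absdiff (f u) (f w)) /\
  (forall u v, adj u v -> absdiff (f u) (f v) <> f u /\ absdiff (f u) (f v) <> f v).

Definition has_ptd (G : sgraph) (k : nat) : Prop := exists f, @ptd_labeling G k f.

Definition is_chi_td (G : sgraph) (c : nat) : Prop :=
  has_ptd G c /\ forall k, has_ptd G k -> c <= k.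

Definition Kadj (n : nat) : rel 'I_n := fun i j => i != j.
Lemma Kadj_sym n : symmetric (@Kadj n).
Proof. by move=> i j; rewrite /Kadj eq_sym. Qed.
Lemma Kadj_irr n : irreflexive (@Kadj n).
Proof. by move=> i; rewrite /Kadj eqxx. Qed.
Definition Kn (n : nat) : sgraph := SGraph (@Kadj_sym n) (@Kadj_irr n).

(* clone cl(G) = G □ K_2 *)
Definition cladj (G : sgraph) : rel (vtx G * bool) := fun x y =>
  ((x.2 == y.2) && adj x.1 y.1) || ((x.1 == y.1) && (x.2 != y.2)).
Lemma cladj_sym G : symmetric (@cladj G).
Proof.
move=> [u a] [v b]; rewrite /cladj /= (eq_sym a) (eq_sym u) adj_sym //.
Qed.
Lemma cladj_irr G : irreflexive (@cladj G).
Proof. by move=> [u a]; rewrite /cladj /= !eqxx adj_irr. Qed.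
Definition clone (G : sgraph) : sgraph := SGraph (@cladj_sym G) (@cladj_irr G).

From mathcomp Require Import all_boot zify perm.
From Stdlib Require Import Classical.

(* Given proper k-total difference labelings f and g of G, label the vertex
   (u, false) of cl(G) by 2 f(u) - 1 and (u, true) by 2 g(u). Within a copy all
   vertex and edge labels are those of f or g doubled (and shifted by one),
   while an edge between the copies gets an odd label; by parity every
   condition then reduces to one for f or g, except that the edge between the
   copies of u must avoid the label 2 f(u) - 1, i.e. g(u) <> 2 f(u) - 1.
   On K_n labelings are injective, so g := f works unless some vertex a has
   label 1; then g is f with the labels of a and another vertex swapped. *)

Set Implicit Arguments. Unset Strict Implicit. Unset Printing Implicit Defensive.

Lemma absdiffC a b : absdiff a b = absdiff b a.
Proof. by rewrite /absdiff addnC. Qed.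

Lemma absdiff_double a b : absdiff (2 * a) (2 * b) = 2 * absdiff a b.
Proof. rewrite /absdiff; lia. Qed.

Lemma odd_absdiff a b : odd (absdiff a b) = odd a (+) odd b.
Proof. rewrite /absdiff; lia. Qed.

Section CloneLabeling.

Variables (G : sgraph) (k : nat) (f g : vtx G -> nat).
Hypotheses (f_ptd : ptd_labeling k f) (g_ptd : ptd_labeling k g).
Hypothesis g_avoid : forall u, g u != (2 * f u).-1.

Definition copy_label (a : bool) : vtx G -> nat := if a then g else f.

Definition clone_labeling (x : vtx G * bool) : nat :=
  if x.2 then 2 * g x.1 else (2 * f x.1).-1.

Local Notation h := clone_labeling.

Lemma copy_label_ptd a : ptd_labeling k (copy_label a).
Proof. by case: a. Qed.

Lemma copy_label_gt0 a u : 0 < copy_label a u.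
Proof. by case: (copy_label_ptd a) => /(_ u) /andP[]. Qed.

Lemma clone_labeling_same_copy u v a :
  absdiff (h (u, a)) (h (v, a)) = 2 * absdiff (copy_label a u) (copy_label a v).
Proof.
case: a; first exact: absdiff_double.
have := copy_label_gt0 false u; have := copy_label_gt0 false v.
rewrite /clone_labeling /absdiff /=; lia.
Qed.

Lemma odd_clone_labeling x : odd (h x) = ~~ x.2.
Proof.
case: x => u [] /=; first by rewrite oddM.
have := copy_label_gt0 false u; rewrite /= /clone_labeling /=; lia.
Qed.

Lemma odd_clone_cross_edge u a : odd (absdiff (h (u, a)) (h (u, ~~ a))).
Proof. by rewrite odd_absdiff !odd_clone_labeling /=; case: a. Qed.

Lemma clone_adjP (u v : vtx G) a b :
  cladj (u, a) (v, b) -> (b = a /\ adj u v) \/ (v = u /\ b = ~~ a).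
Proof.
rewrite /cladj /= => /orP[/andP[/eqP -> uv] | /andP[/eqP -> ab]]; first by left.
by right; case: a b ab => [] [].
Qed.

Lemma clone_labeling_range x : 1 <= h x <= 2 * k.
Proof.
case: x => u [] /=; rewrite /clone_labeling /=.
- by case: g_ptd => /(_ u); lia.
- by case: f_ptd => /(_ u); lia.
Qed.

Lemma clone_labeling_adj x y : cladj x y -> h x <> h y.
Proof.
case: x y => [u a] [v b] /clone_adjP[[-> uv] | [-> ->]] hxy.
- case: (copy_label_ptd a) => _ [/(_ u v uv) + _].
  have := clone_labeling_same_copy u v a; rewrite hxy /absdiff; lia.
- by have := odd_clone_cross_edge u a; rewrite hxy odd_absdiff addbb.
Qed.

Lemma same_copy_cross_edge_neq u v a :
  absdiff (h (u, a)) (h (v, a)) <> absdiff (h (u, a)) (h (u, ~~ a)).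
Proof. by move/(congr1 odd); rewrite clone_labeling_same_copy odd_clone_cross_edge oddM. Qed.

Lemma clone_labeling_incident_edges x y z :
  cladj x y -> cladj x z -> y <> z -> absdiff (h x) (h y) <> absdiff (h x) (h z).
Proof.
case: x y z => [u a] [v b] [w c].
case/clone_adjP => [[-> uv] | [-> ->]]; case/clone_adjP => [[-> uw] | [-> ->]] yz //.
- rewrite !clone_labeling_same_copy => /eqP; rewrite eqn_pmul2l // => /eqP.
  by case: (copy_label_ptd a) => _ [_ [/(_ u v w uv uw) + _]]; apply; congruence.
- exact: same_copy_cross_edge_neq.
- exact/nesym/same_copy_cross_edge_neq.
Qed.

Lemma cross_edge_ends u :
  absdiff (h (u, false)) (h (u, true)) <> h (u, false) /\
  absdiff (h (u, false)) (h (u, true)) <> h (u, true).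
Proof.
have := g_avoid u; have := copy_label_gt0 false u; have := copy_label_gt0 true u.
rewrite /clone_labeling /absdiff /=; lia.
Qed.

Lemma clone_labeling_edge_ends x y :
  cladj x y -> absdiff (h x) (h y) <> h x /\ absdiff (h x) (h y) <> h y.
Proof.
case: x y => [u a] [v b] /clone_adjP[[-> uv] | [-> ->]].
- rewrite clone_labeling_same_copy /clone_labeling; case: a => /=.
  + by case: g_ptd => _ [_ [_ /(_ u v uv)]]; lia.
  + by have := copy_label_gt0 false u; have := copy_label_gt0 false v; rewrite /=; lia.
- case: a; last exact: cross_edge_ends.
  by rewrite absdiffC; case: (cross_edge_ends u).
Qed.

Lemma clone_labeling_ptd : ptd_labeling (G := clone G) (2 * k) clone_labeling.
Proof.
split; first exact: clone_labeling_range.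
split; first exact: clone_labeling_adj.
split; [exact: clone_labeling_incident_edges | exact: clone_labeling_edge_ends].
Qed.

End CloneLabeling.

Lemma ptd_labeling_perm (G : sgraph) k (f : vtx G -> nat) (s : {perm vtx G}) :
  {mono s : u v / adj u v} -> ptd_labeling k f -> ptd_labeling k (f \o s).
Proof.
move=> s_mono [f_range [f_adj [f_inc f_ends]]]; split; [|split; [|split]] => /=.
- by move=> v; apply: f_range.
- by move=> u v uv; apply: f_adj; rewrite s_mono.
- by move=> u v w uv uw vw; apply: f_inc; rewrite ?s_mono // => /perm_inj.
- by move=> u v uv; apply: f_ends; rewrite s_mono.
Qed.

Lemma Kn_perm_mono n (s : {perm 'I_n}) : {mono s : u v / @Kadj n u v}.
Proof. by move=> u v; rewrite /Kadj (inj_eq perm_inj). Qed.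

Lemma Kn_ptd_labeling_inj n k (f : 'I_n -> nat) (f_ptd : ptd_labeling (G := Kn n) k f) :
  injective f.
Proof. by case: f_ptd => _ [f_adj _] u v fuv; apply/eqP/negPn/negP => /f_adj. Qed.

Lemma Kn_relabeling_avoid n k (f : 'I_n -> nat) (n_gt1 : 1 < n)
    (f_ptd : ptd_labeling (G := Kn n) k f) :
  exists2 g, ptd_labeling (G := Kn n) k g & forall u, g u != (2 * f u).-1.
Proof.
have f_inj := Kn_ptd_labeling_inj f_ptd.
have f_gt0 u : 0 < f u by case: f_ptd => /(_ u) /andP[].
have [/existsP[a fa1] | no1] := boolP [exists a, f a == 1]; last first.
  exists f => // u; move/existsPn/(_ u): no1; have := f_gt0 u; lia.
have /card_gt0P[b ba] : 0 < #|predC1 a| by rewrite cardC1 card_ord; lia.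
exists (f \o tperm a b); first by apply: ptd_labeling_perm f_ptd; exact: Kn_perm_mono.
move=> u /=; have fb1 : f b != 1 by rewrite -(eqP fa1) (inj_eq f_inj).
case: tpermP => [-> | -> | /eqP ua _]; rewrite ?(eqP fa1).
1, 2: by have := f_gt0 b; lia.
- have fu1 : f u != 1 by rewrite -(eqP fa1) (inj_eq f_inj).
  by have := f_gt0 u; lia.
Qed.

Lemma has_ptd_chi_td_le (G : sgraph) k :
  has_ptd G k -> exists d, is_chi_td G d /\ d <= k.
Proof.
elim/ltn_ind: k => k IH G_k.
have [[k' [k'k G_k']] | no_smaller] := classic (exists k', k' < k /\ has_ptd G k').
- by have [d [chi_d dk']] := IH k' k'k G_k'; exists d; split; last exact: ltnW (leq_ltn_trans dk' k'k).
- exists k; split=> //; split=> // k' G_k'; rewrite leqNgt; apply/negP => k'k.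
  by apply: no_smaller; exists k'.
Qed.

Theorem mainTheorem10 (n : nat) (hn : 3 <= n) (c : nat) :
  is_chi_td (Kn n) c ->
  exists d, is_chi_td (clone (Kn n)) d /\ d <= 2 * c.
Proof.
move=> [[f f_ptd] _]; apply: has_ptd_chi_td_le.
have [g g_ptd g_avoid] := Kn_relabeling_avoid (ltnW hn) f_ptd.
by exists (clone_labeling f g); apply: clone_labeling_ptd.
Qed.
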